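(* Let the Algorithm and assumptions (A1)–(A4) be as in the context, with constants $L_H,K_H,\delta_g,\delta_H,\nu$. Suppose the algorithm does not terminate at the $N$-th iteration, and that for every iteration $k$ the parameters satisfy $\delta_g\le\frac{9\delta_H^2}{4\sigma_k}$ and \[ \delta_H\le\min\Big\{\min\{\tfrac1{18},\tfrac{1-\rho_{TH}}{9}\}\big(\sqrt{K_H^2+4\sigma_k\varepsilon_g}-K_H\big),\ \min\{\tfrac19,\tfrac{2(1-\rho_{TH})}{9}\}\nu\varepsilon_H\Big\}. \] Then $\sigma_k\le\max\{\sigma_0,2\gamma L_H\}$ for all $k=1,2,\dots,N$.
   Context: Let $\mathcal M$ be a connected complete Riemannian manifold; $\langle\cdot,\cdot\rangle$ and $\|\cdot\|$ denote the inner product and norm on tangent spaces $T_x\mathcal M$. Let $f=\frac1n\sum_{i=1}^n f_i$ with each $f_i:\mathcal M\to\mathbb R$ twice continuously differentiable; $\mathrm{grad} f$ is the Riemannian gradient. A retraction is a smooth map $R:T\mathcal M\to\mathcal M$ whose restriction $R_x$ to $T_x\mathcal M$ satisfies $R_x(0_x)=x$, $DR_x(0_x)=\mathrm{Id}$. $\nabla^2 f\circ R_x(0_x)$ is the Hessian at $0_x$ of $f\circ R_x$ on the inner-product space $T_x\mathcal M$ (a self-adjoint operator). $\lambda_{\min}(H)$ denotes the smallest eigenvalue of a self-adjoint operator $H$. Algorithm: fix $\varepsilon_g,\varepsilon_H,\rho_{TH}\in(0,1)$, $\gamma>1$, $x_0\in\mathcal M$, $\sigma_0>0$. At iteration $k$: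 construct $G_k\in T_{x_k}\mathcal M$ and self-adjoint linear $H_k$ on $T_{x_k}\mathcal M$; if $\|G_k\|\le\varepsilon_g$ and $\lambda_{\min}(H_k)\ge-\varepsilon_H$, stop (terminate at iteration $k$); otherwise choose $\eta_k\in T_{x_k}\mathcal M$ approximately minimizing $m_k(\eta):=\langle G_k,\eta\rangle+\frac12\langle H_k[\eta],\eta\rangle+\frac13\sigma_k\|\eta\|^3$, set $\rho_k=\frac{f(x_k)-f\circ R_{x_k}(\eta_k)}{-m_k(\eta_k)}$; if $\rho_k\ge\rho_{TH}$ set $x_{k+1}=R_{x_k}(\eta_k)$, $\sigma_{k+1}=\sigma_k/\gamma$, else $x_{k+1}=x_k$, $\sigma_{k+1}=\gamma\sigma_k$. Cauchy point and eigenpoint: $\eta_k^C:=-\alpha^C G_k$ with $\alpha^C\in\arg\min_{\alpha\ge0}m_k(-\alpha G_k)$. Fix $\nu\in(0,1)$. When $\lambda_{\min}(H_k)<0$, $\eta_k^E:=\alpha^E u_k$ where $u_k$ satisfies $\langle u_k,H_k[u_k]\rangle\le\nu\lambda_{\min}(H_k)\|u_k\|^2<0$ and $\langle G_k,u_k\rangle\le0$, and $\alpha^E\in\arg\min_{\alpha\ge0}m_k(\alpha u_k)$. Assumptions: (A1) there is $L_H>0$ with $\big|f\circ R_{x_k}(\eta_k)-f(x_k)-\langle\mathrm{grad} f(x_k),\eta_k\rangle-\frac12\langle\nabla^2 f\circ R_{x_k}(0_{x_k})[\eta_k],\eta_k\rangle\big|\le\frac12L_H\|\eta_k\|^3$ for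 all $k$. (A2) there is $K_H>0$ with $\|H_k\|:=\sup_{\|\eta\|\le1}\langle\eta,H_k[\eta]\rangle\le K_H$ for all $k$. (A3) there are $\delta_g,\delta_H\in(0,1)$ with $\|G_k-\mathrm{grad} f(x_k)\|\le\delta_g$ and $\|(H_k-\nabla^2 f\circ R_{x_k}(0_{x_k}))[\eta_k]\|\le\delta_H\|\eta_k\|$ for all $k$. (A4) for all $k$, $-m_k(\eta_k)\ge-m_k(\eta_k^C)$, and $-m_k(\eta_k)\ge-m_k(\eta_k^E)$ whenever $\lambda_{\min}(H_k)<0$. *)

From HB Require Import structures.
From mathcomp Require Import all_boot all_order all_algebra.
From mathcomp Require Import all_classical all_reals all_analysis.
Set Implicit Arguments. Unset Strict Implicit. Unset Printing Implicit Defensive.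
Import Order.TTheory GRing.Theory Num.Theory.
Import numFieldNormedType.Exports.
Local Open Scope ring_scope.

(* Tangent spaces T_x M are modelled in orthonormal coordinates as 'rV[R]_d
   with the Euclidean inner product. *)
Definition dotv (R : realType) (d : nat) (u v : 'rV[R]_d) : R := (u *m v^T) 0 0.
Definition normv (R : realType) (d : nat) (u : 'rV[R]_d) : R := Num.sqrt (dotv u u).

Definition is_lambda_min (R : realType) (d : nat) (A : 'M[R]_d) (l : R) : Prop :=
  eigenvalue A l /\ forall a, eigenvalue A a -> l <= a.

(* Cubic model m_k(eta) = <G,eta> + 1/2 <H[eta],eta> + 1/3 sigma ||eta||^3,
   where H[eta] = eta *m H (row-vector convention). *)
Definition cubic_model (R : realType) (d : nat) (G : 'rV[R]_d) (H : 'M[R]_d)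
  (s : R) (e : 'rV[R]_d) : R :=
  dotv G e + 2^-1 * dotv (e *m H) e + 3^-1 * s * normv e ^+ 3.

Definition is_argmin_nonneg (R : realType) (phi : R -> R) (a : R) : Prop :=
  0 <= a /\ forall b, 0 <= b -> phi a <= phi b.

Definition avg_fun (R : realType) (M : Type) (n : nat) (fs : 'I_n -> M -> R)
  (y : M) : R := n%:R^-1 * \sum_(i < n) fs i y.

Definition ev (R : realType) (d : nat) (i : 'I_d) : 'rV[R]_d := delta_mx 0 i.

Definition coord_grad (R : realType) (d : nat) (g : 'rV[R]_d -> R) : 'rV[R]_d :=
  \row_i derive g 0 (ev R i).

Definition coord_hess (R : realType) (d : nat) (g : 'rV[R]_d -> R) : 'M[R]_d :=
  \matrix_(i, j) derive (fun p => derive g p (ev R j)) 0 (ev R i).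

Definition C2 (R : realType) (d : nat) (g : 'rV[R]_d -> R) : Prop :=
  (forall p v, derivable g p v) /\
  (forall p v w, derivable (fun q => derive g q w) p v) /\
  (forall v w, continuous (fun q => derive (fun r => derive g r w) q v)).

Definition rgrad (R : realType) (d : nat) (M : Type) (f : M -> R)
  (retr : M -> 'rV[R]_d -> M) (y : M) : 'rV[R]_d :=
  coord_grad (fun v => f (retr y v)).
Definition rhess (R : realType) (d : nat) (M : Type) (f : M -> R)
  (retr : M -> 'rV[R]_d -> M) (y : M) : 'M[R]_d :=
  coord_hess (fun v => f (retr y v)).

From HB Require Import structures.
From mathcomp Require Import all_boot all_order all_algebra.
From mathcomp Require Import all_classical all_reals all_analysis.
From mathcomp Require Import ring lra.
Import Order.TTheory GRing.Theory Num.Theory.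
Import numFieldNormedType.Exports.
Local Open Scope ring_scope.
Set Implicit Arguments.
Unset Strict Implicit.

(* Once sigma_k >= 2 L_H, the cubic term of the model dominates the Taylor
   remainder, so with the inexactness bounds (A3) the gap
   f(R(eta_k)) - f(x_k) - m_k(eta_k) is at most 16 delta_H^3 / sigma_k^2,
   whatever the size of eta_k.  As the algorithm has not stopped, either
   ||G_k|| > eps_g and the Cauchy point forces a model decrease
   q eps_g / (4 sigma_k) with q = sqrt(K_H^2 + 4 sigma_k eps_g) - K_H, or
   lambda_min(H_k) < -eps_H and the eigenpoint forces mu^3 / (6 sigma_k^2) with
   mu = -nu lambda_min(H_k).  The conditions on delta_H bound the gap by
   (1 - rho_TH) times this decrease, so rho_k >= rho_TH and sigma shrinks.
   Hence sigma only grows, by the factor gamma, from values below 2 L_H. *)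
Section InnerProduct.
Variables (R : realType) (d : nat).
Implicit Types u v w : 'rV[R]_d.

Lemma dotvE u v : dotv u v = \sum_j u 0 j * v 0 j.
Proof. by rewrite /dotv !mxE; apply: eq_bigr => j _; rewrite mxE. Qed.

Lemma dotvC u v : dotv u v = dotv v u.
Proof. by rewrite !dotvE; apply: eq_bigr => j _; rewrite mulrC. Qed.

Lemma dotvDl u v w : dotv (u + v) w = dotv u w + dotv v w.
Proof. by rewrite !dotvE -big_split; apply: eq_bigr => j _; rewrite mxE mulrDl. Qed.

Lemma dotvZl (c : R) u v : dotv (c *: u) v = c * dotv u v.
Proof. by rewrite !dotvE mulr_sumr; apply: eq_bigr => j _; rewrite mxE mulrA. Qed.

Lemma dotvNl u v : dotv (- u) v = - dotv u v.
Proof. by rewrite -scaleN1r dotvZl mulN1r. Qed.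

Lemma dotvBl u v w : dotv (u - v) w = dotv u w - dotv v w.
Proof. by rewrite dotvDl dotvNl. Qed.

Lemma dotvZr (c : R) u v : dotv u (c *: v) = c * dotv u v.
Proof. by rewrite dotvC dotvZl dotvC. Qed.

Lemma dotv0r u : dotv u 0 = 0.
Proof. by rewrite -(scale0r (0 : 'rV[R]_d)) dotvZr mul0r. Qed.

Lemma dotv_ge0 u : 0 <= dotv u u.
Proof. by rewrite dotvE sumr_ge0 // => j _; rewrite -expr2 sqr_ge0. Qed.

Lemma dotv_eq0 u : (dotv u u == 0) = (u == 0).
Proof.
apply/idP/eqP => [|->]; last by rewrite dotv0r.
rewrite dotvE psumr_eq0 => [/allP u0|j _]; last by rewrite -expr2 sqr_ge0.
apply/rowP => j; rewrite mxE; apply/eqP.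
by rewrite -sqrf_eq0 expr2; apply: (implyP (u0 j (mem_index_enum j))).
Qed.

Lemma dotv_sqr_le u v : dotv u v ^+ 2 <= dotv u u * dotv v v.
Proof.
have [->|v_neq0] := eqVneq v 0; first by rewrite !dotv0r expr0n mulr0.
have vv_gt0 : 0 < dotv v v by rewrite lt_def dotv_eq0 v_neq0 dotv_ge0.
have := dotv_ge0 (dotv v v *: u - dotv u v *: v).
rewrite dotvBl !dotvZl !(dotvC _ (_ - _)) !dotvBl !dotvZl (dotvC v u) => h.
have : 0 <= dotv v v * (dotv u u * dotv v v - dotv u v ^+ 2).
  by move: h; congr (_ <= _); ring.
by rewrite pmulr_rge0 // subr_ge0.
Qed.

Lemma normv_ge0 u : 0 <= normv u.
Proof. exact: sqrtr_ge0. Qed.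

Lemma normv_sqr u : normv u ^+ 2 = dotv u u.
Proof. by rewrite sqr_sqrtr // dotv_ge0. Qed.

Lemma normvZ (c : R) u : normv (c *: u) = `|c| * normv u.
Proof. by rewrite /normv dotvZl dotvZr mulrA -expr2 sqrtrM ?sqr_ge0 // sqrtr_sqr. Qed.

Lemma normvN u : normv (- u) = normv u.
Proof. by rewrite -scaleN1r normvZ normrN normr1 mul1r. Qed.

Lemma dotv_le_normv u v : dotv u v <= normv u * normv v.
Proof.
rewrite -sqrtrM ?dotv_ge0 //; apply: le_trans (ler_norm _) _.
by rewrite -sqrtr_sqr ler_sqrt ?dotv_sqr_le // mulr_ge0 ?dotv_ge0.
Qed.

End InnerProduct.

Section ScalarBounds.
Variable R : realType.

Lemma cubic_le192 (t : R) : 0 <= t -> 27 * t + 6 * t ^+ 2 - t ^+ 3 <= 192.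
Proof.
move=> t_ge0; have [t_le3|t_gt3] := lerP t 3.
  have : 0 <= t ^+ 3 by rewrite exprn_ge0.
  nra.
have : 0 <= (t - 6) ^+ 2 * (t + 6) by rewrite mulr_ge0 ?sqr_ge0 //; lra.
have -> : 27 * t + 6 * t ^+ 2 - t ^+ 3 = 192 - (t - 6) ^+ 2 * (t + 6) - (9 * t - 24).
  by ring.
lra.
Qed.

(* With [t = s r / dH] the left-hand side is at most
   [dH^3 / (12 s^2) * (27 t + 6 t^2 - t^3)]. *)
Lemma cubic_error_le (s L dg dH r : R) : 0 < s -> 0 < dH -> 0 <= r ->
  dg <= 9 * dH ^+ 2 / (4 * s) -> 2 * L <= s ->
  dg * r + 2^-1 * dH * r ^+ 2 + (2^-1 * L - 3^-1 * s) * r ^+ 3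
    <= 16 * dH ^+ 3 / s ^+ 2.
Proof.
move=> s_gt0 dH_gt0 r_ge0 dg_le L_le.
have r3_ge0 : 0 <= r ^+ 3 by rewrite exprn_ge0.
have dg_r : dg * r <= 9 * dH ^+ 2 / (4 * s) * r by rewrite ler_wpM2r.
have cubic_r : (2^-1 * L - 3^-1 * s) * r ^+ 3 <= - (12^-1 * s) * r ^+ 3.
  by rewrite ler_wpM2r //; lra.
pose t := s * r / dH.
have c_gt0 : 0 < dH ^+ 3 / (12 * s ^+ 2) by rewrite divr_gt0 ?mulr_gt0 ?exprn_gt0.
have t_ge0 : 0 <= t by rewrite /t divr_ge0 ?mulr_ge0 // ltW.
have /(ler_wpM2l (ltW c_gt0)) := cubic_le192 t_ge0.
have -> : dH ^+ 3 / (12 * s ^+ 2) * (27 * t + 6 * t ^+ 2 - t ^+ 3)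
    = 9 * dH ^+ 2 / (4 * s) * r + 2^-1 * dH * r ^+ 2 - (12^-1 * s) * r ^+ 3.
  by rewrite /t; field; rewrite !gt_eqF.
have -> : dH ^+ 3 / (12 * s ^+ 2) * 192 = 16 * dH ^+ 3 / s ^+ 2.
  by field; rewrite gt_eqF.
lra.
Qed.

Lemma sqrt_shift_gt0 (K c : R) : 0 <= K -> 0 < c -> 0 < Num.sqrt (K ^+ 2 + c) - K.
Proof.
move=> K_ge0 c_gt0; rewrite subr_gt0 -{1}(ger0_norm K_ge0) -sqrtr_sqr.
by rewrite ltr_sqrt ?ltrDl // ltr_wpDl ?sqr_ge0.
Qed.

Lemma sqrt_shift_root (K c : R) : 0 <= K ^+ 2 + c ->
  (Num.sqrt (K ^+ 2 + c) - K) ^+ 2 + 2 * K * (Num.sqrt (K ^+ 2 + c) - K) = c.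
Proof.
move=> disc_ge0; have := sqr_sqrtr disc_ge0; set r := Num.sqrt _ => r2.
by rewrite -[c](addKr (K ^+ 2)) -r2; ring.
Qed.

Lemma cauchy_value_le (s K eps g q : R) : 0 < s -> 0 <= q -> eps <= g ->
  q ^+ 2 + 2 * K * q = 4 * s * eps ->
  - (q / (2 * s)) * g + 2^-1 * K * (q / (2 * s)) ^+ 2 + 3^-1 * s * (q / (2 * s)) ^+ 3
    <= - (q * eps / (4 * s)).
Proof.
move=> s_gt0 q_ge0 eps_le q_root.
have beta_ge0 : 0 <= q / (2 * s) by rewrite divr_ge0 // mulr_ge0 // ltW.
have lin : - (q / (2 * s)) * g <= - (q / (2 * s)) * eps.
  by rewrite !mulNr lerN2 ler_wpM2l.
have cubic : q * (3 * K * q + q ^+ 2) <= q * (6 * s * eps).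
  by rewrite ler_wpM2l //; have := sqr_ge0 q; lra.
have -> : - (q * eps / (4 * s)) = - (q / (2 * s)) * eps + 2^-1 * K * (q / (2 * s)) ^+ 2
    + 3^-1 * s * (q / (2 * s)) ^+ 3
    - (q * (3 * K * q + q ^+ 2) - q * (6 * s * eps)) / (24 * s ^+ 2).
  by field; rewrite gt_eqF.
have : (q * (3 * K * q + q ^+ 2) - q * (6 * s * eps)) / (24 * s ^+ 2) <= 0.
  by rewrite mulr_le0_ge0 ?subr_le0 // invr_ge0 mulr_ge0 // exprn_ge0 // ltW.
lra.
Qed.

Lemma expr3_le_min (a b c : R) : 0 <= c -> c <= a -> c <= b -> c ^+ 3 <= a ^+ 2 * b.
Proof.
move=> c_ge0 c_le_a c_le_b; rewrite exprSr ler_pM ?exprn_ge0 // lerXn2r // nnegrE.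
exact: le_trans c_le_a.
Qed.

Lemma cauchy_gap_le (s eps rho dH q : R) : 0 < s -> 0 < eps -> rho < 1 -> 0 < dH ->
  0 <= q -> q ^+ 2 <= 4 * s * eps ->
  dH <= Num.min (18^-1) ((1 - rho) / 9) * q ->
  16 * dH ^+ 3 / s ^+ 2 <= (1 - rho) * (q * eps / (4 * s)).
Proof.
move=> s_gt0 eps_gt0 rho_lt1 dH_gt0 q_ge0 q2_le dH_le.
set c := Num.min _ _ in dH_le.
have c_ge0 : 0 <= c by rewrite le_min; apply/andP; split; lra.
have c3_le : c ^+ 3 <= (18^-1) ^+ 2 * ((1 - rho) / 9).
  by rewrite expr3_le_min // ge_min lexx ?orbT.
have q3_le : q ^+ 3 <= q * (4 * s * eps) by rewrite exprS ler_wpM2l.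
have dH3_le : dH ^+ 3 <= (18^-1) ^+ 2 * ((1 - rho) / 9) * (q * (4 * s * eps)).
  apply: le_trans (ler_pM _ _ c3_le q3_le); rewrite ?exprn_ge0 // -exprMn.
  by rewrite lerXn2r // nnegrE ?mulr_ge0 // ltW.
rewrite ler_pdivrMr ?exprn_gt0 //.
have -> : (1 - rho) * (q * eps / (4 * s)) * s ^+ 2 = (1 - rho) * s * q * eps / 4.
  by field; rewrite gt_eqF.
have : 0 <= (1 - rho) * s * q * eps.
  by rewrite !mulr_ge0 ?subr_ge0 // ltW.
lra.
Qed.

Lemma eigen_gap_le (s mu nu eps rho dH : R) : 0 < s -> rho < 1 -> 0 < dH ->
  0 <= nu * eps -> nu * eps <= mu ->
  dH <= Num.min (9^-1) (2 * (1 - rho) / 9) * nu * eps ->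
  16 * dH ^+ 3 / s ^+ 2 <= (1 - rho) * (mu ^+ 3 / (6 * s ^+ 2)).
Proof.
move=> s_gt0 rho_lt1 dH_gt0 ne_ge0 ne_le dH_le.
have mu_ge0 : 0 <= mu := le_trans ne_ge0 ne_le.
set c := Num.min _ _ in dH_le; rewrite -mulrA in dH_le.
have c_ge0 : 0 <= c by rewrite le_min; apply/andP; split; lra.
have c3_le : c ^+ 3 <= (9^-1) ^+ 2 * (2 * (1 - rho) / 9).
  by rewrite expr3_le_min // ge_min lexx ?orbT.
have dH3_le : dH ^+ 3 <= (9^-1) ^+ 2 * (2 * (1 - rho) / 9) * mu ^+ 3.
  apply: le_trans (ler_wpM2r (exprn_ge0 3 mu_ge0) c3_le).
  rewrite -exprMn lerXn2r ?nnegrE ?mulr_ge0 ?(ltW dH_gt0) //.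
  exact: le_trans dH_le (ler_wpM2l c_ge0 ne_le).
rewrite ler_pdivrMr ?exprn_gt0 //.
have -> : (1 - rho) * (mu ^+ 3 / (6 * s ^+ 2)) * s ^+ 2 = (1 - rho) * mu ^+ 3 / 6.
  by field; rewrite gt_eqF // exprn_gt0.
have : 0 <= (1 - rho) * mu ^+ 3.
  by rewrite mulr_ge0 ?subr_ge0 ?exprn_ge0 // ltW.
lra.
Qed.

End ScalarBounds.

Section CubicModel.
Variables (R : realType) (d : nat).
Implicit Types (G u eta : 'rV[R]_d) (H : 'M[R]_d).

Lemma cubic_modelZ G H (s a : R) u :
  cubic_model G H s (a *: u) = a * dotv G u + 2^-1 * a ^+ 2 * dotv (u *m H) u
    + 3^-1 * s * (`|a| * normv u) ^+ 3.
Proof.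
rewrite /cubic_model normvZ dotvZr -scalemxAl dotvZl dotvZr.
by congr (_ + _ + _); rewrite expr2; ring.
Qed.

Lemma model_error_le G gr eta H Hs (s L dg dH fx fR : R) :
  `|fR - fx - dotv gr eta - 2^-1 * dotv (eta *m Hs) eta| <= 2^-1 * L * normv eta ^+ 3 ->
  normv (G - gr) <= dg -> normv (eta *m (H - Hs)) <= dH * normv eta ->
  fR - fx - cubic_model G H s eta <=
    dg * normv eta + 2^-1 * dH * normv eta ^+ 2 + (2^-1 * L - 3^-1 * s) * normv eta ^+ 3.
Proof.
move=> taylor grad_err hess_err; have eta_ge0 := normv_ge0 eta.
have grad_term : dotv (gr - G) eta <= dg * normv eta.
  by apply: le_trans (dotv_le_normv _ _) _; rewrite -normvN opprB ler_wpM2r.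
have hess_term : dotv (eta *m Hs - eta *m H) eta <= dH * normv eta ^+ 2.
  apply: le_trans (dotv_le_normv _ _) _.
  by rewrite -normvN opprB -mulmxBr expr2 mulrA ler_wpM2r.
move: (le_trans (ler_norm _) taylor) grad_term hess_term.
rewrite /cubic_model !dotvBl; lra.
Qed.

Lemma model_gradient_step_le G H (s K beta : R) : 0 < normv G -> 0 <= beta ->
  (forall e, normv e <= 1 -> dotv e (e *m H) <= K) ->
  cubic_model G H s (- ((beta / normv G) *: G))
    <= - beta * normv G + 2^-1 * K * beta ^+ 2 + 3^-1 * s * beta ^+ 3.
Proof.
move=> g_gt0 beta_ge0 hess_le; set g := normv G in g_gt0 *.
have curv : dotv (G *m H) G <= K * g ^+ 2.
  have unit : normv (g^-1 *: G) <= 1 by rewrite normvZ gtr0_norm ?invr_gt0 // mulVf ?gt_eqF.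
  have := hess_le _ unit; rewrite -scalemxAl dotvZl dotvZr dotvC mulrA -expr2 exprVn.
  by rewrite ler_pdivrMl ?exprn_gt0 // mulrC.
have quad : (- (beta / g)) ^+ 2 * dotv (G *m H) G <= K * beta ^+ 2.
  have -> : K * beta ^+ 2 = (- (beta / g)) ^+ 2 * (K * g ^+ 2) by field; rewrite gt_eqF.
  by rewrite ler_wpM2l ?sqr_ge0.
rewrite -scaleNr cubic_modelZ -normv_sqr -/g normrN ger0_norm ?divr_ge0 ?(ltW g_gt0) //.
rewrite divfK ?gt_eqF //.
have -> : - (beta / g) * g ^+ 2 = - beta * g by field; rewrite gt_eqF.
lra.
Qed.

Lemma model_eigen_step_le G H (s mu : R) u : 0 < s -> 0 < mu -> 0 < normv u ->
  dotv u (u *m H) <= - mu * normv u ^+ 2 -> dotv G u <= 0 ->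
  cubic_model G H s ((mu / (s * normv u)) *: u) <= - (mu ^+ 3 / (6 * s ^+ 2)).
Proof.
move=> s_gt0 mu_gt0 u_gt0 curv descent; set w := normv u in u_gt0 curv *.
set a := mu / (s * w).
have a_gt0 : 0 < a by rewrite divr_gt0 // mulr_gt0.
rewrite cubic_modelZ gtr0_norm // -/w (dotvC (u *m H)).
have lin : a * dotv G u <= 0 by rewrite mulr_ge0_le0 // ltW.
have quad : a ^+ 2 * dotv u (u *m H) <= a ^+ 2 * (- mu * w ^+ 2).
  by rewrite ler_wpM2l ?sqr_ge0.
have -> : - (mu ^+ 3 / (6 * s ^+ 2))
    = 2^-1 * (a ^+ 2 * (- mu * w ^+ 2)) + 3^-1 * s * (a * w) ^+ 3.
  by rewrite /a; field; rewrite !gt_eqF.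
lra.
Qed.

End CubicModel.

Section Iteration.
Variables (R : realType) (d : nat).
Variables (G gr u eta : 'rV[R]_d) (H Hs : 'M[R]_d).
Variables (s lam alphaC alphaE fx fR L K eps_g eps_H nu rho dg dH : R).
Hypotheses (s_gt0 : 0 < s) (L_le : 2 * L <= s) (K_ge0 : 0 <= K).
Hypotheses (eps_g_gt0 : 0 < eps_g) (eps_H_gt0 : 0 < eps_H) (nu_gt0 : 0 < nu).
Hypotheses (rho_lt1 : rho < 1) (dH_gt0 : 0 < dH).
Hypothesis not_stopped : ~ (normv G <= eps_g /\ - eps_H <= lam).
Hypothesis cauchy_argmin :
  is_argmin_nonneg (fun a => cubic_model G H s (- (a *: G))) alphaC.
Hypothesis eigen_point : lam < 0 ->
  [/\ dotv u (u *m H) <= nu * lam * normv u ^+ 2, nu * lam * normv u ^+ 2 < 0,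
      dotv G u <= 0 & is_argmin_nonneg (fun a => cubic_model G H s (a *: u)) alphaE].
Hypothesis taylor : `|fR - fx - dotv gr eta - 2^-1 * dotv (eta *m Hs) eta|
  <= 2^-1 * L * normv eta ^+ 3.
Hypothesis hess_le : forall e, normv e <= 1 -> dotv e (e *m H) <= K.
Hypotheses (grad_err : normv (G - gr) <= dg)
  (hess_err : normv (eta *m (H - Hs)) <= dH * normv eta).
Hypothesis cauchy_decrease :
  - cubic_model G H s eta >= - cubic_model G H s (- (alphaC *: G)).
Hypothesis eigen_decrease : lam < 0 ->
  - cubic_model G H s eta >= - cubic_model G H s (alphaE *: u).
Hypothesis dg_le : dg <= 9 * dH ^+ 2 / (4 * s).
Hypothesis dH_le : dH <= Num.min
  (Num.min (18^-1) ((1 - rho) / 9) * (Num.sqrt (K ^+ 2 + 4 * s * eps_g) - K))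
  (Num.min (9^-1) (2 * (1 - rho) / 9) * nu * eps_H).

Let certifies P := [/\ 0 < P, P <= - cubic_model G H s eta
  & 16 * dH ^+ 3 / s ^+ 2 <= (1 - rho) * P].

Lemma model_gap_le : fR - fx - cubic_model G H s eta <= 16 * dH ^+ 3 / s ^+ 2.
Proof.
apply: le_trans (model_error_le s taylor grad_err hess_err) _.
exact: cubic_error_le s_gt0 dH_gt0 (normv_ge0 eta) dg_le L_le.
Qed.

Lemma cauchy_certificate : eps_g < normv G -> exists P, certifies P.
Proof.
move=> g_gt; have g_gt0 := lt_trans eps_g_gt0 g_gt.
have c_gt0 : 0 < 4 * s * eps_g by rewrite !mulr_gt0.
have := dH_le; rewrite le_min => /andP[dH_le_q _].
set q := Num.sqrt (K ^+ 2 + 4 * s * eps_g) - K in dH_le_q.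
have q_gt0 : 0 < q := sqrt_shift_gt0 K_ge0 c_gt0.
have q_root : q ^+ 2 + 2 * K * q = 4 * s * eps_g.
  exact: sqrt_shift_root (addr_ge0 (sqr_ge0 K) (ltW c_gt0)).
have beta_ge0 : 0 <= q / (2 * s) by rewrite divr_ge0 ?mulr_ge0 // ltW.
exists (q * eps_g / (4 * s)); split.
- by rewrite divr_gt0 ?mulr_gt0.
- have [_ /= argmin] := cauchy_argmin.
  have := argmin _ (divr_ge0 beta_ge0 (ltW g_gt0)).
  have := model_gradient_step_le s g_gt0 beta_ge0 hess_le.
  have := cauchy_value_le s_gt0 (ltW q_gt0) (ltW g_gt) q_root.
  move: cauchy_decrease; lra.
- apply: cauchy_gap_le s_gt0 eps_g_gt0 rho_lt1 dH_gt0 (ltW q_gt0) _ dH_le_q.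
  by rewrite -q_root lerDl !mulr_ge0 // ltW.
Qed.

Lemma eigen_certificate : lam < - eps_H -> exists P, certifies P.
Proof.
move=> lam_lt; have lam_lt0 : lam < 0 by rewrite (lt_trans lam_lt) // oppr_lt0.
have [uHu_le uu_lt0 Gu_le0 [_ /= argmin]] := eigen_point lam_lt0.
set mu := - (nu * lam).
have ne_gt0 : 0 < nu * eps_H by rewrite mulr_gt0.
have ne_le : nu * eps_H <= mu by rewrite /mu -mulrN ler_wpM2l ?(ltW nu_gt0) //; lra.
have mu_gt0 : 0 < mu := lt_le_trans ne_gt0 ne_le.
have u_gt0 : 0 < normv u.
  rewrite lt_def normv_ge0 andbT; apply: contraTneq uu_lt0 => ->.
  by rewrite expr0n mulr0 ltxx.
have curv : dotv u (u *m H) <= - mu * normv u ^+ 2 by rewrite /mu opprK.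
exists (mu ^+ 3 / (6 * s ^+ 2)); split.
- by rewrite divr_gt0 ?exprn_gt0 ?mulr_gt0.
- have := argmin _ (ltW (divr_gt0 mu_gt0 (mulr_gt0 s_gt0 u_gt0))).
  have := model_eigen_step_le s_gt0 mu_gt0 u_gt0 curv Gu_le0.
  move: (eigen_decrease lam_lt0); lra.
- apply: eigen_gap_le s_gt0 rho_lt1 dH_gt0 (ltW ne_gt0) ne_le _.
  by move: dH_le; rewrite le_min => /andP[].
Qed.

Lemma iteration_successful : rho <= (fx - fR) / (- cubic_model G H s eta).
Proof.
have [P [P_gt0 P_le gap_le]] : exists P, certifies P.
  have [g_gt|g_le] := ltrP eps_g (normv G); first exact: cauchy_certificate.
  apply: eigen_certificate; rewrite ltNge; apply/negP => lam_ge.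
  exact: not_stopped.
have m_gt0 : 0 < - cubic_model G H s eta := lt_le_trans P_gt0 P_le.
have rho_gap_ge0 : 0 <= 1 - rho by rewrite subr_ge0 ltW.
have := ler_wpM2l rho_gap_ge0 P_le.
rewrite ler_pdivlMr //; move: model_gap_le gap_le; nra.
Qed.

End Iteration.

Lemma update_bounded (R : realType) (s : nat -> R) (gamma c : R) (N : nat) :
  1 < gamma -> 0 < s 0%N ->
  (forall k, (k < N)%N -> s k.+1 = s k / gamma \/ s k.+1 = gamma * s k) ->
  (forall k, (k < N)%N -> 0 < s k -> c <= s k -> s k.+1 = s k / gamma) ->
  forall k, (k <= N)%N -> s k <= Num.max (s 0%N) (gamma * c).
Proof.
move=> gamma_gt1 s0_gt0 update shrink.
have gamma_gt0 : 0 < gamma := lt_trans ltr01 gamma_gt1.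
have s_gt0 k : (k <= N)%N -> 0 < s k.
  elim: k => [|k IH] kN //; have sk_gt0 := IH (ltnW kN).
  by have [->|->] := update k kN; [rewrite divr_gt0 | rewrite mulr_gt0].
have div_le k : (k <= N)%N -> s k / gamma <= s k.
  move=> kN; rewrite ler_pdivrMr // ler_peMr ?(ltW gamma_gt1) //.
  exact: ltW (s_gt0 k kN).
elim=> [|k IH] kN; first by rewrite le_max lexx.
have kN' := ltnW kN; have s_le := le_trans (div_le k kN') (IH kN').
have [c_le|s_lt] := lerP c (s k); first by rewrite shrink // s_gt0.
have [->|->] := update k kN; first exact: s_le.
by rewrite le_max ler_pM2l // (ltW s_lt) orbT.
Qed.

Theorem lemma3p7 (R : realType) (d : nat) (M : Type) (n : nat)
  (fs : 'I_n -> M -> R) (retr : M -> 'rV[R]_d -> M)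
  (eps_g eps_H rho_TH gamma sigma0 nu L_H K_H delta_g delta_H : R)
  (x : nat -> M) (sigma : nat -> R) (G : nat -> 'rV[R]_d) (H : nat -> 'M[R]_d)
  (lam : nat -> R) (eta : nat -> 'rV[R]_d)
  (alphaC : nat -> R) (u : nat -> 'rV[R]_d) (alphaE : nat -> R) (N : nat) :
  (0 < n)%N -> (0 < d)%N ->
  (forall y, retr y 0 = y) ->
  (forall i y, C2 (fun v => fs i (retr y v))) ->
  0 < eps_g < 1 -> 0 < eps_H < 1 -> 0 < rho_TH < 1 -> 1 < gamma ->
  0 < sigma0 -> 0 < nu < 1 ->
  (* algorithm *)
  sigma 0%N = sigma0 ->
  (forall k, (k <= N)%N -> (H k)^T = H k /\ is_lambda_min (H k) (lam k)) ->
  (forall k, (k <= N)%N -> ~ (normv (G k) <= eps_g /\ - eps_H <= lam k)) ->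
  (forall k, (k <= N)%N ->
     let rho := (avg_fun fs (x k) - avg_fun fs (retr (x k) (eta k)))
                / (- cubic_model (G k) (H k) (sigma k) (eta k)) in
     (rho_TH <= rho -> x k.+1 = retr (x k) (eta k) /\ sigma k.+1 = sigma k / gamma) /\
     (rho < rho_TH -> x k.+1 = x k /\ sigma k.+1 = gamma * sigma k)) ->
  (* Cauchy point and eigenpoint *)
  (forall k, (k <= N)%N ->
     is_argmin_nonneg (fun a => cubic_model (G k) (H k) (sigma k) (- (a *: G k)))
                      (alphaC k)) ->
  (forall k, (k <= N)%N -> lam k < 0 ->
     [/\ dotv (u k) (u k *m H k) <= nu * lam k * normv (u k) ^+ 2,
         nu * lam k * normv (u k) ^+ 2 < 0,
         dotv (G k) (u k) <= 0 &
         is_argmin_nonneg (fun a => cubic_model (G k) (H k) (sigma k) (a *: u k))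
                          (alphaE k)]) ->
  (* (A1) *)
  0 < L_H ->
  (forall k, (k <= N)%N ->
     `| avg_fun fs (retr (x k) (eta k)) - avg_fun fs (x k)
        - dotv (rgrad (avg_fun fs) retr (x k)) (eta k)
        - 2^-1 * dotv (eta k *m rhess (avg_fun fs) retr (x k)) (eta k) |
     <= 2^-1 * L_H * normv (eta k) ^+ 3) ->
  (* (A2) *)
  0 < K_H ->
  (forall k, (k <= N)%N -> forall e : 'rV[R]_d,
     normv e <= 1 -> dotv e (e *m H k) <= K_H) ->
  (* (A3) *)
  0 < delta_g < 1 -> 0 < delta_H < 1 ->
  (forall k, (k <= N)%N ->
     normv (G k - rgrad (avg_fun fs) retr (x k)) <= delta_g /\
     normv (eta k *m (H k - rhess (avg_fun fs) retr (x k))) <= delta_H * normv (eta k)) ->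
  (* (A4) *)
  (forall k, (k <= N)%N ->
     - cubic_model (G k) (H k) (sigma k) (eta k)
       >= - cubic_model (G k) (H k) (sigma k) (- (alphaC k *: G k)) /\
     (lam k < 0 ->
       - cubic_model (G k) (H k) (sigma k) (eta k)
         >= - cubic_model (G k) (H k) (sigma k) (alphaE k *: u k))) ->
  (* parameter conditions *)
  (forall k, (k <= N)%N ->
     delta_g <= 9 * delta_H ^+ 2 / (4 * sigma k) /\
     delta_H <= Num.min
       (Num.min (18^-1) ((1 - rho_TH) / 9)
          * (Num.sqrt (K_H ^+ 2 + 4 * sigma k * eps_g) - K_H))
       (Num.min (9^-1) (2 * (1 - rho_TH) / 9) * nu * eps_H)) ->
  forall k, (1 <= k <= N)%N -> sigma k <= Num.max sigma0 (2 * gamma * L_H).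
Proof.
move=> _ _ _ _ /andP[eps_g_gt0 _] /andP[eps_H_gt0 _] /andP[_ rho_lt1] gamma_gt1
  sigma0_gt0 /andP[nu_gt0 _] sigma_0 _ not_stopped update cauchy eigen _ taylor
  K_gt0 hess_le _ /andP[dH_gt0 _] approx decrease params.
have step k : (k < N)%N -> sigma k.+1 = sigma k / gamma \/ sigma k.+1 = gamma * sigma k.
  move=> /ltnW kN; have /= [succ fail] := update k kN.
  set r := (avg_fun fs (x k) - _) / _ in succ fail.
  by have [/succ[_ ->]|/fail[_ ->]] := lerP rho_TH r; [left|right].
have shrink k : (k < N)%N -> 0 < sigma k -> 2 * L_H <= sigma k ->
    sigma k.+1 = sigma k / gamma.
  move=> /ltnW kN sigma_gt0 L_le; apply: ((update k kN).1 _).2.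
  have [grad_err hess_err] := approx k kN; have [dg_le dH_le] := params k kN.
  have [cauchy_dec eigen_dec] := decrease k kN.
  exact: iteration_successful sigma_gt0 L_le (ltW K_gt0) eps_g_gt0 eps_H_gt0 nu_gt0
    rho_lt1 dH_gt0 (not_stopped k kN) (cauchy k kN) (eigen k kN) (taylor k kN)
    (hess_le k kN) grad_err hess_err cauchy_dec eigen_dec dg_le dH_le.
move=> k /andP[_ kN]; rewrite -sigma_0 (mulrC 2) -mulrA.
by apply: update_bounded gamma_gt1 _ step shrink k kN; rewrite sigma_0.
Qed.
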